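(* Fix an integer $M\ge 1$ and a real $\delta>0$. Then there is $T_0$ such that for every integer $T\ge T_0$, with $n=\left\lceil (1+\delta)\,\mathrm{e}\ln 2\,(M+1)^2\log_2 T\right\rceil$, there exists a code $(\mathbf{c}_1,\dots,\mathbf{c}_T)$ of $T$ binary words of length $n$ satisfying both of the following: (I) (identification) for every $t\in\{1,\dots,T\}$, every set $S\subseteq\{1,\dots,T\}\setminus\{t\}$ with $|S|\le M$, and every choice of shifts $s_u\in\{0,1,\dots,n-1\}$ ($u\in S$), the vector $\bigvee_{u\in S}\sigma_{s_u}(\mathbf{c}_u)$ does not cover $\mathbf{c}_t$; (S) (synchronization) for every $t\in\{1,\dots,T\}$, every $d\in\{1,\dots,n-1\}$, every set $S\subseteq\{1,\dots,T\}\setminus\{t\}$ with $|S|\le M-1$, and every choice of shifts $s_u\in\{0,1,\dots,n-1\}$ ($u\in S$), the vector $\sigma_d(\mathbf{c}_t)\vee\bigvee_{u\in S}\sigma_{s_u}(\mathbf{c}_u)$ does not cover $\mathbf{c}_t$. In other words, the minimum length $n_{\mathrm{asyn}}(T,M)$ of a code for asynchronous signature coding over the OR channel satisfies $n_{\mathrm{asyn}}(T,M)\lesssim \mathrm{e}\ln 2\,(M+1)^2\log_2 T$ as $T\to\infty$ with $M$ fixed.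
   Context: Binary vectors are elements of $\{0,1\}^n$; $\vee$ denotes the componentwise Boolean OR (an empty OR is the all-zero vector). A vector $\mathbf{y}=(y_1,\dots,y_n)$ covers $\mathbf{z}=(z_1,\dots,z_n)$ if $y_i\ge z_i$ for all $i$. For $\mathbf{c}\in\{0,1\}^n$ and an integer $s\in\{0,\dots,n-1\}$, the shifted vector $\sigma_s(\mathbf{c})\in\{0,1\}^n$ is defined by $(\sigma_s(\mathbf{c}))_i=c_{i-s}$ if $i>s$ and $(\sigma_s(\mathbf{c}))_i=0$ if $i\le s$. Logarithm $\log$ is base 2, $\ln$ is natural. *)

From Stdlib Require Import Reals List.
Open Scope R_scope.

(* A binary word of length n is a function word : nat -> bool, read at
   positions 1..n (values outside 1..n are irrelevant). *)
Definition word := nat -> bool.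

Definition shift (s : nat) (c : word) : word :=
  fun i => if Nat.ltb s i then c (i - s)%nat else false.

Definition bigor (l : list word) : word :=
  fun i => existsb (fun w => w i) l.

Definition covers (n : nat) (y z : word) : Prop :=
  forall i, (1 <= i <= n)%nat -> z i = true -> y i = true.

Definition por (y z : word) : word := fun i => orb (y i) (z i).

Definition log2 (x : R) : R := ln x / ln 2.

Definition is_ceil (x : R) (n : nat) : Prop := INR n - 1 < x <= INR n.

Definition valid_set (T t m : nat) (S : list nat) : Prop :=
  NoDup S /\ (length S <= m)%nat /\
  (forall u, In u S -> (1 <= u <= T)%nat /\ u <> t).

Definition shifted_or (c : nat -> word) (S : list nat) (s : nat -> nat) : word :=
  bigor (map (fun u => shift (s u) (c u)) S).

Definition async_code (n M T : nat) (c : nat -> word) : Prop :=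
  (forall t S (s : nat -> nat), (1 <= t <= T)%nat -> valid_set T t M S ->
     (forall u, In u S -> (s u < n)%nat) ->
     ~ covers n (shifted_or c S s) (c t)) /\
  (forall t d S (s : nat -> nat), (1 <= t <= T)%nat -> (1 <= d <= n - 1)%nat ->
     valid_set T t (M - 1) S ->
     (forall u, In u S -> (s u < n)%nat) ->
     ~ covers n (por (shift d (c t)) (shifted_or c S s)) (c t)).

From Stdlib Require ZArith.
From Stdlib Require Import Reals List Lra Lia Permutation ClassicalEpsilon FunctionalExtensionality.
Open Scope R_scope.

(* Random coding. Draw all letters independently, each equal to [1] with
   probability [p = 1/(M+1)]. A code fails only if one of at most
   [T n (M+1) (T n)^M] configurations (user [t], self-shift [d], interferers
   with their shifts) covers [c_t]. Position [i] of [c_t] is left uncovered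
   with probability at least [r = p (1-p)^M]; for synchronization the positions are
   not independent, since [c_t] also covers itself, and a potential that
   weighs the last [d] letters of [c_t] still bounds the probability that a
   fixed configuration covers [c_t] by [(1-r)^n]. As [r >= 1/(e (M+1))],
   taking [n ~ (1+delta) e (M+1)^2 ln T] makes the union bound
   [(M+1) (T n)^(M+1) (1-r)^n] tend to [0]. *)

(** * Product Bernoulli measure on cell assignments *)

(* The cell [(u, j)] holds the [j]-th letter of the [u]-th codeword. *)
Definition cell := (nat * nat)%type.

Definition cell_eq_dec : forall x y : cell, {x = y} + {x <> y}.
Proof. decide equality; apply Nat.eq_dec. Defined.

Definition assignment := cell -> bool.

Definition upd (g : assignment) (x : cell) (b : bool) : assignment :=
  fun y => if cell_eq_dec y x then b else g y.

Lemma upd_eq g x b : upd g x b x = b.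
Proof. unfold upd; destruct (cell_eq_dec x x); congruence. Qed.

Lemma upd_neq g x y b : y <> x -> upd g x b y = g y.
Proof. unfold upd; destruct (cell_eq_dec y x); congruence. Qed.

Lemma upd_comm g x y a b : x <> y -> upd (upd g x a) y b = upd (upd g y b) x a.
Proof.
  intros Hxy; apply functional_extensionality; intros z; unfold upd.
  destruct (cell_eq_dec z y), (cell_eq_dec z x); congruence.
Qed.

(* [expect p L F g] is the expectation of [F] when the cells of [L] are redrawn
   independently, each being [true] with probability [p], while every other
   cell keeps its value in [g]. *)
Fixpoint expect (p : R) (L : list cell) (F : assignment -> R) (g : assignment) : R :=
  match L with
  | nil => F g
  | x :: L' => p * expect p L' F (upd g x true) + (1 - p) * expect p L' F (upd g x false)
  end.

Definition b2R (b : bool) : R := if b then 1 else 0.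

Definition indicator (Q : Prop) : R := if excluded_middle_informative Q then 1 else 0.

Definition all_false (L : list cell) (g : assignment) : bool :=
  forallb (fun x => negb (g x)) L.

Lemma all_false_agree L g h :
  (forall x, In x L -> g x = h x) -> all_false L g = all_false L h.
Proof.
  unfold all_false; induction L as [|x L IH]; intros H; simpl; [reflexivity|].
  rewrite (H x) by (left; reflexivity).
  rewrite IH by (intros; apply H; right; assumption); reflexivity.
Qed.

Section Expectation.

Variable p : R.

Lemma expect_ext_local L F G g :
  (forall h, (forall x, ~ In x L -> h x = g x) -> F h = G h) ->
  expect p L F g = expect p L G g.
Proof.
  revert g; induction L as [|y L IH]; intros g H; simpl.
  - apply H; auto.
  - f_equal; f_equal; apply IH; intros h Hh; apply H; intros x Hx;
      rewrite Hh by (intro; apply Hx; right; assumption);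
      apply upd_neq; intros ->; apply Hx; left; reflexivity.
Qed.

Lemma expect_const L c g : expect p L (fun _ => c) g = c.
Proof. revert g; induction L as [|y L IH]; intros g; simpl; rewrite ?IH; ring. Qed.

Lemma expect_scale L a F g : expect p L (fun h => a * F h) g = a * expect p L F g.
Proof. revert g; induction L as [|y L IH]; intros g; simpl; rewrite ?IH; ring. Qed.

Lemma expect_plus L F G g :
  expect p L (fun h => F h + G h) g = expect p L F g + expect p L G g.
Proof. revert g; induction L as [|y L IH]; intros g; simpl; rewrite ?IH; ring. Qed.

Lemma expect_app L1 L2 F g : expect p (L1 ++ L2) F g = expect p L1 (expect p L2 F) g.
Proof. revert g; induction L1 as [|y L IH]; intros g; simpl; rewrite ?IH; reflexivity. Qed.

Lemma expect_perm L L' F g : Permutation L L' -> expect p L F g = expect p L' F g.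
Proof.
  intros HP; induction HP as [|x L L' _ IH|x y L|L L' L'' _ IH1 _ IH2] in g |- *; simpl.
  - reflexivity.
  - rewrite !IH; reflexivity.
  - destruct (cell_eq_dec x y) as [->|Hxy]; [reflexivity|].
    rewrite !(upd_comm _ y x) by congruence; ring.
  - rewrite IH1; apply IH2.
Qed.

Lemma expect_all_false L g :
  NoDup L -> expect p L (fun h => b2R (all_false L h)) g = (1 - p) ^ length L.
Proof.
  revert g; induction L as [|y L IH]; intros g HL; simpl; [reflexivity|].
  inversion HL as [|? ? HyL HLnd]; subst.
  assert (Hb : forall b, expect p L (fun h => b2R (negb (h y) && all_false L h)) (upd g y b)
                         = b2R (negb b) * (1 - p) ^ length L).
  { intros b; rewrite <- IH with (g := upd g y b) by assumption; rewrite <- expect_scale.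
    apply expect_ext_local; intros h Hh.
    rewrite Hh, upd_eq by assumption; destruct b, (all_false L h); simpl; unfold b2R; ring. }
  rewrite !Hb; simpl; unfold b2R; ring.
Qed.

Lemma expect_not_all_false L g :
  NoDup L -> expect p L (fun h => b2R (negb (all_false L h))) g = 1 - (1 - p) ^ length L.
Proof.
  intros HL; rewrite <- expect_all_false with (g := g) by assumption.
  replace (1 - _) with (expect p L (fun _ => 1) g + -1 * expect p L (fun h => b2R (all_false L h)) g)
    by (rewrite expect_const; ring).
  rewrite <- expect_scale, <- expect_plus.
  apply expect_ext_local; intros h _; destruct (all_false L h); unfold b2R; simpl; ring.
Qed.

Hypothesis p_prob : 0 <= p <= 1.

Lemma expect_mono L F G g : (forall h, F h <= G h) -> expect p L F g <= expect p L G g.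
Proof.
  intros H; revert g; induction L as [|y L IH]; intros g; simpl; auto.
  apply Rplus_le_compat; apply Rmult_le_compat_l; auto; lra.
Qed.

Lemma expect_lt_1 L F g : expect p L F g < 1 -> exists h, F h < 1.
Proof.
  revert g; induction L as [|y L IH]; intros g H; simpl in H; [eauto|].
  destruct (Rlt_dec (expect p L F (upd g y true)) 1) as [Ht|Ht]; [eauto|].
  destruct (Rlt_dec (expect p L F (upd g y false)) 1) as [Hf|Hf]; [eauto|].
  exfalso; nra.
Qed.

Lemma expect_le_of_incl L L' F g c :
  NoDup L -> NoDup L' -> incl L' L -> (forall h, expect p L' F h <= c) ->
  expect p L F g <= c.
Proof.
  intros HL HL' Hincl Hc.
  set (rest := filter (fun x => if in_dec cell_eq_dec x L' then false else true) L).
  assert (Hperm : Permutation L (rest ++ L')).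
  { apply NoDup_Permutation; auto.
    - apply NoDup_app; [apply NoDup_filter; auto | auto |].
      intros x Hx; unfold rest in Hx; apply filter_In in Hx.
      destruct (in_dec cell_eq_dec x L'); [discriminate (proj2 Hx) | auto].
    - intros x; rewrite in_app_iff; unfold rest; rewrite filter_In.
      destruct (in_dec cell_eq_dec x L'); intuition. }
  rewrite (expect_perm _ _ _ _ Hperm), expect_app.
  rewrite <- (expect_const rest c g); apply expect_mono; auto.
Qed.

Lemma expect_union_bound {X : Type} L (B : X -> assignment -> Prop) cs e g :
  (forall c, In c cs -> expect p L (fun h => indicator (B c h)) g <= e) ->
  expect p L (fun h => indicator (exists c, In c cs /\ B c h)) g <= INR (length cs) * e.
Proof.
  induction cs as [|c cs IH]; intros Hcs; simpl length.
  - change (INR 0) with 0; rewrite Rmult_0_l, <- (expect_const L 0 g).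
    apply expect_mono; intros h.
    unfold indicator; destruct (excluded_middle_informative _) as [[? [[] _]]|]; lra.
  - rewrite S_INR.
    apply Rle_trans with (expect p L (fun h => indicator (B c h) + indicator (exists c', In c' cs /\ B c' h)) g).
    + apply expect_mono; intros h; unfold indicator.
      repeat destruct (excluded_middle_informative _); try lra.
      exfalso; firstorder (subst; auto).
    + rewrite expect_plus.
      assert (expect p L (fun h => indicator (B c h)) g <= e) by (apply Hcs; left; auto).
      assert (expect p L (fun h => indicator (exists c', In c' cs /\ B c' h)) g <= INR (length cs) * e)
        by (apply IH; intros; apply Hcs; right; auto).
      lra.
Qed.

End Expectation.

(** * The probability that a configuration covers a codeword *)

Fixpoint prodR (k : nat) (F : nat -> R) : R :=
  match k with O => 1 | S k' => prodR k' F * F k' end.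

Lemma prodR_succ_l k F : prodR (S k) F = F O * prodR k (fun j => F (S j)).
Proof. induction k as [|k IH]; simpl in *; [ring|rewrite IH; ring]. Qed.

Lemma prodR_ext k F G : (forall j, (j < k)%nat -> F j = G j) -> prodR k F = prodR k G.
Proof.
  induction k as [|k IH]; intros H; simpl; [reflexivity|].
  rewrite IH by (intros; apply H; lia); rewrite H by lia; reflexivity.
Qed.

Lemma prodR_const k c : prodR k (fun _ => c) = c ^ k.
Proof. induction k as [|k IH]; simpl; [reflexivity|rewrite IH; apply Rmult_comm]. Qed.

Lemma prodR_nonneg k F : (forall j, 0 <= F j) -> 0 <= prodR k F.
Proof. induction k as [|k IH]; intros H; simpl; [lra|apply Rmult_le_pos; auto]. Qed.

Lemma prodR_ge_pow k F c : 0 <= c -> (forall j, c <= F j) -> c ^ k <= prodR k F.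
Proof.
  induction k as [|k IH]; intros Hc H; simpl; [lra|].
  rewrite Rmult_comm; apply Rmult_le_compat; auto using pow_le.
Qed.

Lemma pow_le_pow_of_le_1 x a b : 0 <= x <= 1 -> (a <= b)%nat -> x ^ b <= x ^ a.
Proof.
  intros Hx Hab; induction Hab as [|b _ IH]; simpl; [lra|].
  pose proof (pow_le x b (proj1 Hx)); nra.
Qed.

Lemma NoDup_list_prod {A B : Type} (l : list A) (l' : list B) :
  NoDup l -> NoDup l' -> NoDup (list_prod l l').
Proof.
  induction l as [|a l IH]; intros Hl Hl'; simpl; [constructor|].
  inversion Hl; subst; apply NoDup_app; auto.
  - apply FinFun.Injective_map_NoDup; auto; intros x y E; inversion E; auto.
  - intros x Hx Hy; apply in_map_iff in Hx as [b [<- _]]; apply in_prod_iff in Hy; tauto.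
Qed.

Definition cells (T n : nat) : list cell := list_prod (seq 1 T) (seq 1 n).

Definition codeword (g : assignment) (u : nat) : word := fun j => g (u, j).

(* [P] lists the interfering users [u] together with their shifts [s]. *)
Definition interference (g : assignment) (P : list (nat * nat)) : word :=
  bigor (map (fun us => shift (snd us) (codeword g (fst us))) P).

Definition interference_cells (P : list (nat * nat)) (i : nat) : list cell :=
  map (fun us => (fst us, i - snd us)%nat) (filter (fun us => snd us <? i)%nat P).

Lemma interference_cellsE g P i :
  interference g P i = negb (all_false (interference_cells P i) g).
Proof.
  unfold interference, interference_cells, bigor, all_false.
  induction P as [|[u s] P IH]; simpl; [reflexivity|].
  unfold shift at 1; simpl; destruct (s <? i)%nat; simpl; rewrite IH; [|reflexivity].
  unfold codeword; destruct (g (u, i - s)%nat); reflexivity.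
Qed.

Lemma In_interference_cells P i x :
  In x (interference_cells P i) <->
  exists u s, In (u, s) P /\ (s < i)%nat /\ x = (u, i - s)%nat.
Proof.
  unfold interference_cells; rewrite in_map_iff; split.
  - intros [[u s] [<- Hin]]; apply filter_In in Hin as [Hin Hs].
    apply Nat.ltb_lt in Hs; exists u, s; auto.
  - intros (u & s & Hin & Hs & ->); exists (u, s); split; [reflexivity|].
    apply filter_In; split; [assumption|apply Nat.ltb_lt; assumption].
Qed.

Lemma length_interference_cells P i : (length (interference_cells P i) <= length P)%nat.
Proof.
  unfold interference_cells; rewrite length_map.
  induction P as [|us P IH]; simpl; [lia|destruct (_ <? _)%nat; simpl; lia].
Qed.

Lemma in_map_fst {A B : Type} (P : list (A * B)) u s : In (u, s) P -> In u (map fst P).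
Proof. intros H; apply in_map_iff; exists (u, s); auto. Qed.

Lemma fst_injective_in {A B : Type} (P : list (A * B)) u s s' :
  NoDup (map fst P) -> In (u, s) P -> In (u, s') P -> s = s'.
Proof.
  induction P as [|[v r] P IH]; simpl; intros HP H H'; [contradiction|].
  inversion HP as [|? ? Hv HP']; subst.
  destruct H as [E|H], H' as [E'|H']; try (inversion E; subst); try (inversion E'; subst);
    auto; exfalso; apply Hv; eapply in_map_fst; eauto.
Qed.

Lemma NoDup_interference_cells P i :
  NoDup (map fst P) -> NoDup (interference_cells P i).
Proof.
  unfold interference_cells; induction P as [|[u s] P IH]; simpl; intros HP; [constructor|].
  inversion HP as [|? ? Hu HP']; subst.
  destruct (s <? i)%nat; simpl; auto; constructor; auto.
  intros Hin; apply in_map_iff in Hin as [[v r] [E Hin]]; inversion E; subst.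
  apply filter_In in Hin; apply Hu; eapply in_map_fst; apply Hin.
Qed.

Section SlidingWindow.

Variables (t d' n : nat) (P : list (nat * nat)).
Hypothesis P_nodup : NoDup (map fst P).
Hypothesis t_notin_P : ~ In t (map fst P).

(* The letters read at position [i]; distinct layers are disjoint, so the
   positions can be averaged one at a time. *)
Definition layer (i : nat) : list cell := (t, i) :: interference_cells P i.

Fixpoint layers (m : nat) : list cell :=
  match m with O => nil | S m' => layers m' ++ layer m end.

Lemma t_notin_interference_cells i k : ~ In (t, k) (interference_cells P i).
Proof.
  intros Hin; apply In_interference_cells in Hin as (u & s & Hin & _ & E).
  inversion E; subst; apply t_notin_P; eapply in_map_fst; eauto.
Qed.

Lemma In_layers x m : In x (layers m) <-> exists i, (1 <= i <= m)%nat /\ In x (layer i).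
Proof.
  induction m as [|m IH]; simpl.
  - split; [contradiction|intros (i & Hi & _); lia].
  - rewrite in_app_iff, IH; split.
    + intros [(i & Hi & H)|H]; [exists i|exists (S m)]; split; auto; lia.
    + intros (i & Hi & H); destruct (Nat.eq_dec i (S m)) as [->|]; [right|left]; auto.
      exists i; split; auto; lia.
Qed.

Lemma layers_disjoint i j x : i <> j -> In x (layer i) -> ~ In x (layer j).
Proof.
  intros Hij [<-|Hi] [E|Hj].
  - inversion E; lia.
  - eapply t_notin_interference_cells; eauto.
  - subst x; eapply t_notin_interference_cells; eauto.
  - apply In_interference_cells in Hi as (u & s & Hi & Hsi & ->).
    apply In_interference_cells in Hj as (u' & s' & Hj & Hsj & E); inversion E; subst.
    pose proof (fst_injective_in P u' s s' P_nodup Hi Hj); lia.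
Qed.

Lemma NoDup_layers m : NoDup (layers m).
Proof.
  induction m as [|m IH]; simpl; [constructor|].
  apply NoDup_app; auto.
  - constructor; [apply t_notin_interference_cells|apply NoDup_interference_cells; auto].
  - intros x Hx; apply In_layers in Hx as (i & Hi & Hx); apply (layers_disjoint i); auto; lia.
Qed.

Definition covered_at (g : assignment) (i : nat) : bool :=
  implb (g (t, i)) (shift (S d') (codeword g t) i || interference g P i).

Fixpoint covered_upto (g : assignment) (m : nat) : bool :=
  match m with O => true | S m' => covered_upto g m' && covered_at g m end.

Lemma covered_upto_of_covers g m :
  covers n (por (shift (S d') (codeword g t)) (interference g P)) (codeword g t) ->
  (m <= n)%nat -> covered_upto g m = true.
Proof.
  intros Hcov; induction m as [|m IH]; intros Hm; simpl; [reflexivity|].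
  rewrite IH by lia; unfold covered_at.
  destruct (g (t, S m)) eqn:E; [|reflexivity].
  apply (Hcov (S m)); [lia|exact E].
Qed.

(* Letters at positions [k <= 0] count as [0], matching [shift]. *)
Definition letter (g : assignment) (k : nat) : bool := (1 <=? k)%nat && g (t, k).

Lemma shift_letter g m : shift (S d') (codeword g t) (S m) = letter g (m - d').
Proof.
  unfold shift, letter, codeword; destruct (S d' <? S m)%nat eqn:E.
  - apply Nat.ltb_lt in E; replace (1 <=? m - d')%nat with true by (symmetry; apply Nat.leb_le; lia).
    reflexivity.
  - apply Nat.ltb_ge in E; replace (m - d')%nat with O by lia; reflexivity.
Qed.

Lemma in_layers_letter m k : (1 <= k <= m)%nat -> In (t, k) (layers m).
Proof. intros Hk; apply In_layers; exists k; split; [lia|left; reflexivity]. Qed.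

Lemma letter_agree g h m k :
  (forall x, In x (layers m) -> g x = h x) -> (k <= m)%nat -> letter g k = letter h k.
Proof.
  intros Hgh Hk; unfold letter; destruct (1 <=? k)%nat eqn:E; [|reflexivity].
  apply Nat.leb_le in E; rewrite Hgh; [reflexivity|apply in_layers_letter; lia].
Qed.

Lemma covered_at_agree g h m i :
  (forall x, In x (layers m) -> g x = h x) -> (1 <= i <= m)%nat ->
  covered_at g i = covered_at h i.
Proof.
  intros Hgh Hi; unfold covered_at.
  destruct i as [|i]; [lia|]; rewrite !shift_letter, !interference_cellsE.
  rewrite (letter_agree g h m) by (auto; lia).
  rewrite (Hgh (t, S i)) by (apply in_layers_letter; lia).
  do 3 f_equal; apply all_false_agree.
  intros x Hx; apply Hgh.
  apply In_layers; exists (S i); split; [lia|right; assumption].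
Qed.

Lemma covered_upto_agree g h m :
  (forall x, In x (layers m) -> g x = h x) -> covered_upto g m = covered_upto h m.
Proof.
  intros Hgh; assert (H : forall k, (k <= m)%nat -> covered_upto g k = covered_upto h k).
  { induction k as [|k IH]; intros Hk; simpl; [reflexivity|].
    rewrite IH, (covered_at_agree g h m) by (auto; lia); reflexivity. }
  apply H; lia.
Qed.

Variable al : R.

Definition weight (b : bool) : R := if b then 1 else al.

Definition window (g : assignment) (m : nat) : R :=
  prodR (S d') (fun j => weight (letter g (m - j))).

Definition window_tail (g : assignment) (m : nat) : R :=
  prodR d' (fun j => weight (letter g (m - j))).

Lemma window_succ g m : window g (S m) = weight (g (t, S m)) * window_tail g m.
Proof. unfold window; rewrite prodR_succ_l; reflexivity. Qed.

Lemma window_split g m : window g m = window_tail g m * weight (letter g (m - d')).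
Proof. reflexivity. Qed.

Lemma window_tail_agree g h m :
  (forall x, In x (layers m) -> g x = h x) -> window_tail g m = window_tail h m.
Proof.
  intros Hgh; apply prodR_ext; intros j _; rewrite (letter_agree g h m) by (auto; lia); reflexivity.
Qed.

(* The letter [c_t(m+1-d)] leaving the window decides whether position [m+1]
   is covered by [c_t] itself; weighting the [0] letters by [al] makes the
   expected potential grow by at most a factor [lam] per position. *)
Definition potential (g : assignment) (m : nat) : R := b2R (covered_upto g m) * window g m.

Variables p lam q : R.
Hypothesis p_prob : 0 <= p <= 1.
Hypothesis al_range : 0 < al <= 1.
Hypothesis lam_nonneg : 0 <= lam.
Hypothesis q_le : q <= (1 - p) ^ length P.
Hypothesis step_letter_0 : (1 - p) * al + p * (1 - q) <= lam * al.
Hypothesis step_letter_1 : (S d' < n)%nat -> (1 - p) * al + p <= lam.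

Lemma weight_nonneg b : 0 <= weight b.
Proof. unfold weight; destruct b; lra. Qed.

Lemma layer_step g m : (m < n)%nat ->
  expect p (layer (S m)) (fun h => b2R (covered_at h (S m)) * weight (h (t, S m))) g
  <= lam * weight (letter g (m - d')).
Proof.
  intros Hm; set (L := interference_cells P (S m)); set (b := letter g (m - d')).
  assert (HL : NoDup L) by (apply NoDup_interference_cells; auto).
  assert (Hagree : forall a (h : assignment), (forall x, ~ In x L -> h x = upd g (t, S m) a x) ->
            b2R (covered_at h (S m)) * weight (h (t, S m))
            = if a then b2R (b || negb (all_false L h)) else al).
  { intros a h Hh; unfold covered_at, weight.
    rewrite Hh, upd_eq by apply t_notin_interference_cells.
    destruct a; simpl; [|unfold b2R; ring].
    rewrite shift_letter, interference_cellsE; fold L; rewrite Rmult_1_r.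
    do 3 f_equal; unfold b, letter; destruct (1 <=? m - d')%nat eqn:E; [|reflexivity].
    apply Nat.leb_le in E; rewrite Hh by apply t_notin_interference_cells.
    apply upd_neq; intros F; inversion F; lia. }
  unfold layer; cbn [expect]; fold L.
  rewrite (expect_ext_local p L _ _ _ (Hagree true)), (expect_ext_local p L _ _ _ (Hagree false)).
  rewrite expect_const.
  assert (Hpow : q <= (1 - p) ^ length L).
  { eapply Rle_trans; [exact q_le|]; apply pow_le_pow_of_le_1; [lra|apply length_interference_cells]. }
  destruct b eqn:Eb; unfold weight.
  - rewrite (expect_ext_local p L _ (fun _ => 1)), expect_const by (intros; reflexivity).
    assert (S d' < n)%nat.
    { unfold b, letter in Eb; apply andb_prop in Eb as [E _]; apply Nat.leb_le in E; lia. }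
    specialize (step_letter_1 H); nra.
  - simpl; rewrite expect_not_all_false by assumption; nra.
Qed.

Lemma potential_bound m : (m <= n)%nat ->
  forall g, expect p (layers m) (fun h => potential h m) g <= lam ^ m * al ^ S d'.
Proof.
  induction m as [|m IH]; intros Hm g.
  - cbn [layers expect]; unfold potential, window; cbn [covered_upto].
    rewrite (prodR_ext _ _ (fun _ => al)) by (intros; reflexivity).
    rewrite prodR_const, pow_O; unfold b2R; lra.
  - cbn [layers]; rewrite expect_app.
    apply Rle_trans with (expect p (layers m) (fun h => lam * potential h m) g).
    + apply expect_mono; auto; intros g'.
      set (c := b2R (covered_upto g' m) * window_tail g' m).
      assert (Hc : 0 <= c).
      { apply Rmult_le_pos; [unfold b2R; destruct covered_upto; lra|].
        apply prodR_nonneg; intros; apply weight_nonneg. }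
      rewrite (expect_ext_local p _ _
                 (fun h => c * (b2R (covered_at h (S m)) * weight (h (t, S m))))).
      * rewrite expect_scale; unfold potential; rewrite window_split.
        apply Rle_trans with (c * (lam * weight (letter g' (m - d')))).
        { apply Rmult_le_compat_l; auto; apply layer_step; lia. }
        unfold c; right; ring.
      * intros h Hh.
        assert (Hgh : forall x, In x (layers m) -> g' x = h x).
        { intros x Hx; symmetry; apply Hh; apply In_layers in Hx as (i & Hi & Hx).
          apply (layers_disjoint i); auto; lia. }
        unfold potential, c; cbn [covered_upto]; rewrite window_succ.
        rewrite (covered_upto_agree g' h m), (window_tail_agree g' h m) by assumption.
        destruct (covered_upto h m), (covered_at h (S m)); unfold b2R; simpl; ring.
    + rewrite expect_scale; simpl pow; rewrite Rmult_assoc.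
      apply Rmult_le_compat_l; auto; apply IH; lia.
Qed.

Lemma covering_event_bound T g :
  (1 <= t <= T)%nat -> (forall u s, In (u, s) P -> (1 <= u <= T)%nat) ->
  expect p (cells T n)
    (fun h => indicator (covers n (por (shift (S d') (codeword h t)) (interference h P)) (codeword h t))) g
  <= lam ^ n.
Proof.
  intros Ht HP.
  assert (Hal : 0 < al ^ S d') by (apply pow_lt; lra).
  apply Rle_trans with (expect p (cells T n) (fun h => / al ^ S d' * potential h n) g).
  - apply expect_mono; auto; intros h; unfold indicator.
    destruct (excluded_middle_informative _) as [Hcov|_].
    + unfold potential; rewrite (covered_upto_of_covers h n) by auto.
      assert (al ^ S d' <= window h n)
        by (apply prodR_ge_pow; [lra|intros; unfold weight; destruct letter; lra]).
      unfold b2R; apply (Rmult_le_reg_l (al ^ S d')); auto.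
      rewrite <- Rmult_assoc, Rinv_r by lra; lra.
    + apply Rmult_le_pos; [left; apply Rinv_0_lt_compat; auto|].
      apply Rmult_le_pos; [unfold b2R; destruct covered_upto; lra|].
      apply prodR_nonneg; intros; apply weight_nonneg.
  - apply (expect_le_of_incl p p_prob _ (layers n)).
    + apply NoDup_list_prod; apply seq_NoDup.
    + apply NoDup_layers.
    + intros x Hx; apply In_layers in Hx as (i & Hi & [<-|Hx]); unfold cells.
      * apply in_prod; apply in_seq; lia.
      * apply In_interference_cells in Hx as (u & s & Hin & Hs & ->).
        specialize (HP u s Hin); apply in_prod; apply in_seq; lia.
    + intros h; rewrite expect_scale.
      apply (Rmult_le_reg_l (al ^ S d')); auto.
      rewrite <- Rmult_assoc, Rinv_r, Rmult_1_l by lra.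
      rewrite Rmult_comm; apply potential_bound; lia.
Qed.

End SlidingWindow.

(** * Configurations and the union bound *)

Fixpoint lists_of_length {A : Type} (k : nat) (l : list A) : list (list A) :=
  match k with
  | O => nil :: nil
  | S k' => flat_map (fun a => map (cons a) (lists_of_length k' l)) l
  end.

Fixpoint lists_upto {A : Type} (k : nat) (l : list A) : list (list A) :=
  match k with
  | O => nil :: nil
  | S k' => lists_upto k' l ++ lists_of_length k l
  end.

Lemma length_flat_map_le {A B : Type} (f : A -> list B) l c :
  (forall x, In x l -> (length (f x) <= c)%nat) -> (length (flat_map f l) <= length l * c)%nat.
Proof.
  induction l as [|a l IH]; intros H; simpl; [lia|].
  rewrite length_app.
  assert (length (f a) <= c)%nat by (apply H; left; reflexivity).
  assert (length (flat_map f l) <= length l * c)%nat by (apply IH; intros; apply H; right; auto).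
  lia.
Qed.

Lemma length_lists_of_length {A : Type} k (l : list A) :
  (length (lists_of_length k l) <= length l ^ k)%nat.
Proof.
  induction k as [|k IH]; simpl; [lia|].
  eapply Nat.le_trans; [apply (length_flat_map_le _ _ (length l ^ k))|lia].
  intros; rewrite length_map; assumption.
Qed.

Lemma length_lists_upto {A : Type} k (l : list A) :
  (1 <= length l)%nat -> (length (lists_upto k l) <= S k * length l ^ k)%nat.
Proof.
  intros Hl; induction k as [|k IH]; simpl; [lia|].
  rewrite length_app; pose proof (length_lists_of_length (S k) l).
  assert (length l ^ k <= length l ^ S k)%nat by (simpl; nia).
  simpl in *; nia.
Qed.

Lemma In_lists_of_length {A : Type} k (l x : list A) :
  length x = k -> incl x l -> In x (lists_of_length k l).
Proof.
  revert x; induction k as [|k IH]; intros [|a x] Hx Hincl; simpl in *; try discriminate; auto.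
  apply in_flat_map; exists a; split; [apply Hincl; left; reflexivity|].
  apply in_map, IH; [congruence|intros y Hy; apply Hincl; right; assumption].
Qed.

Lemma In_lists_upto {A : Type} k (l x : list A) :
  (length x <= k)%nat -> incl x l -> In x (lists_upto k l).
Proof.
  induction k as [|k IH]; intros Hx Hincl; cbn [lists_upto].
  - destruct x; simpl in *; [auto|lia].
  - apply in_app_iff; destruct (Nat.eq_dec (length x) (S k)).
    + right; apply In_lists_of_length; assumption.
    + left; apply IH; [lia|assumption].
Qed.

(* A configuration [(t, d, P)] is a potential violation of the code conditions:
   user [t], self-shift [d] and the interferers [P]. Identification is the case
   [d = n], where [shift n] vanishes on the positions [1..n]. *)
Definition config := (nat * nat * list (nat * nat))%type.

Definition valid_config (M T n : nat) (c : config) : Prop :=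
  let '(t, d, P) := c in
  (1 <= t <= T)%nat /\ (1 <= d <= n)%nat /\
  (forall u s, In (u, s) P -> (1 <= u <= T)%nat) /\
  NoDup (map fst P) /\ ~ In t (map fst P) /\
  (length P <= (if d <? n then M - 1 else M))%nat.

Definition covering (n : nat) (c : config) (g : assignment) : Prop :=
  let '(t, d, P) := c in
  covers n (por (shift d (codeword g t)) (interference g P)) (codeword g t).

Definition configs (M T n : nat) : list config :=
  list_prod (list_prod (seq 1 T) (seq 1 n)) (lists_upto M (list_prod (seq 1 T) (seq 0 n))).

Lemma length_configs M T n : (1 <= T)%nat -> (1 <= n)%nat ->
  (length (configs M T n) <= T * (n * (S M * (T * n) ^ M)))%nat.
Proof.
  intros HT Hn; unfold configs, config; rewrite !length_prod, !length_seq.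
  pose proof (length_lists_upto M (list_prod (seq 1 T) (seq 0 n))) as H.
  rewrite length_prod, !length_seq in H; specialize (H ltac:(nia)).
  rewrite Nat.mul_assoc; apply Nat.mul_le_mono_l; exact H.
Qed.

Lemma interference_pairs g S s :
  interference g (map (fun u => (u, s u)) S) = shifted_or (codeword g) S s.
Proof. unfold interference, shifted_or; rewrite map_map; reflexivity. Qed.

Lemma map_fst_pairs (S : list nat) (s : nat -> nat) : map fst (map (fun u => (u, s u)) S) = S.
Proof. rewrite map_map; apply map_id. Qed.

Lemma In_pairs (S : list nat) (s : nat -> nat) u v :
  In (u, v) (map (fun u => (u, s u)) S) -> In u S /\ v = s u.
Proof. intros H; apply in_map_iff in H as (w & E & Hw); inversion E; subst; auto. Qed.

Lemma config_of_violation M T n t d S s :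
  (1 <= t <= T)%nat -> (1 <= d <= n)%nat ->
  valid_set T t (if d <? n then M - 1 else M) S -> (forall u, In u S -> (s u < n)%nat) ->
  let c := (t, d, map (fun u => (u, s u)) S) in
  In c (configs M T n) /\ valid_config M T n c.
Proof.
  intros Ht Hd (HS & HlenS & HuS) Hs c.
  assert (Hlen : (length S <= M)%nat) by (destruct (d <? n)%nat; lia).
  split.
  - apply in_prod; [apply in_prod; apply in_seq; lia|].
    apply In_lists_upto; [rewrite length_map; assumption|].
    intros [u v] Huv; apply In_pairs in Huv as [Hu ->].
    specialize (HuS u Hu); specialize (Hs u Hu); apply in_prod; apply in_seq; lia.
  - unfold valid_config, c; rewrite map_fst_pairs, length_map.
    refine (conj Ht (conj Hd (conj _ (conj HS (conj _ HlenS))))).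
    + intros u v Huv; apply In_pairs in Huv as [Hu _]; apply HuS; assumption.
    + intros Ht'; apply (HuS t Ht'); reflexivity.
Qed.

Lemma async_code_of_no_covering M T n g :
  (1 <= n)%nat ->
  (forall c, In c (configs M T n) -> valid_config M T n c -> ~ covering n c g) ->
  async_code n M T (codeword g).
Proof.
  intros Hn Hnone; split.
  - intros t S s Ht HS Hs Hcov.
    destruct (config_of_violation M T n t n S s) as [Hin Hvalid]; auto; try lia.
    { rewrite Nat.ltb_irrefl; assumption. }
    apply (Hnone _ Hin Hvalid); simpl.
    rewrite interference_pairs; intros i Hi Hc; unfold por; rewrite (Hcov i Hi Hc).
    apply Bool.orb_true_r.
  - intros t d S s Ht Hd HS Hs Hcov.
    destruct (config_of_violation M T n t d S s) as [Hin Hvalid]; auto; try lia.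
    { replace (d <? n)%nat with true by (symmetry; apply Nat.ltb_lt; lia); assumption. }
    apply (Hnone _ Hin Hvalid); simpl; rewrite interference_pairs; assumption.
Qed.

(* Letters are drawn with [p = 1/(M+1)]; [rate M = p (1-p)^M] is the
   probability that a fixed position of [c_t] is [1] while [M] independent
   interfering letters are all [0]. *)
Definition letter_prob (M : nat) : R := / INR (S M).

Definition rate (M : nat) : R := letter_prob M * (1 - letter_prob M) ^ M.

Lemma letter_prob_range M : (1 <= M)%nat -> 0 < letter_prob M < 1.
Proof.
  intros HM; unfold letter_prob; rewrite S_INR.
  assert (1 <= INR M) by (apply (le_INR 1); assumption).
  split; [apply Rinv_0_lt_compat; lra|].
  rewrite <- Rinv_1; apply Rinv_lt_contravar; lra.
Qed.

Lemma rate_range M : (1 <= M)%nat -> 0 <= rate M <= 1.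
Proof.
  intros HM; pose proof (letter_prob_range M HM) as Hp; unfold rate.
  pose proof (pow_le_pow_of_le_1 (1 - letter_prob M) 0 M ltac:(lra) ltac:(lia)).
  pose proof (pow_le (1 - letter_prob M) M ltac:(lra)).
  simpl in *; nra.
Qed.

Lemma covering_prob M T n c g :
  (1 <= M)%nat -> valid_config M T n c ->
  expect (letter_prob M) (cells T n) (fun h => indicator (covering n c h)) g <= (1 - rate M) ^ n.
Proof.
  intros HM; destruct c as [[t [|d']] P]; intros (Ht & Hd & HP & HPnd & Ht' & HlenP); [lia|].
  set (p := letter_prob M) in *; pose proof (letter_prob_range M HM) as Hp; fold p in Hp.
  set (x := 1 - p).
  assert (Hx : 0 < x < 1) by (unfold x; lra).
  (* With a [0] letter weighted by [1 - p q], both transition bounds hold for [lam = 1 - p x q]. *)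
  assert (Hparams : forall k, let q := x ^ k in
            0 < 1 - p * q <= 1 /\
            x * (1 - p * q) + p * (1 - q) <= (1 - p * x * q) * (1 - p * q) /\
            x * (1 - p * q) + p <= 1 - p * x * q).
  { intros k q; assert (0 < q <= 1).
    { split; [apply pow_lt; lra|apply (pow_le_pow_of_le_1 x 0 k); lra || lia]. }
    assert (0 <= p * p * x * q * q) by (repeat apply Rmult_le_pos; lra).
    repeat split; unfold x in *; nra. }
  destruct (S d' <? n)%nat eqn:Ed.
  - apply Nat.ltb_lt in Ed.
    destruct (Hparams (M - 1)%nat) as (Hal & H0 & H1).
    replace (1 - rate M) with (1 - p * x * x ^ (M - 1)).
    2: { unfold rate; fold p x; destruct M as [|M']; [lia|]; simpl; rewrite Nat.sub_0_r; ring. }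
    apply (covering_event_bound t d' n P HPnd Ht' (1 - p * x ^ (M - 1)) p _ (x ^ (M - 1)));
      auto; try lra.
    + assert (0 <= p * x * x ^ (M - 1)) by (repeat apply Rmult_le_pos; try apply pow_le; lra).
      pose proof (pow_le_pow_of_le_1 x 0 (M - 1)); simpl in *; nra.
    + apply pow_le_pow_of_le_1; [lra|assumption].
  - apply Nat.ltb_ge in Ed.
    replace (1 - rate M) with (1 - p * x ^ M) by reflexivity.
    apply (covering_event_bound t d' n P HPnd Ht' 1 p _ (x ^ M)); auto; try lra.
    + pose proof (rate_range M HM) as Hr; unfold rate in Hr; fold p x in Hr; lra.
    + apply pow_le_pow_of_le_1; [lra|assumption].
    + intros; lia.
Qed.

Lemma valid_covering_prob M T n c g :
  (1 <= M)%nat ->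
  expect (letter_prob M) (cells T n) (fun h => indicator (valid_config M T n c /\ covering n c h)) g
  <= (1 - rate M) ^ n.
Proof.
  intros HM; pose proof (letter_prob_range M HM) as Hp.
  destruct (excluded_middle_informative (valid_config M T n c)) as [Hv|Hv].
  - eapply Rle_trans; [|apply (covering_prob M T n c g HM Hv)].
    apply expect_mono; [lra|]; intros h; unfold indicator.
    repeat destruct (excluded_middle_informative _); tauto || lra.
  - rewrite <- (expect_const (letter_prob M) (cells T n) ((1 - rate M) ^ n) g).
    apply expect_mono; [lra|]; intros h; unfold indicator.
    destruct (excluded_middle_informative _) as [[]|]; [tauto|].
    apply pow_le; pose proof (rate_range M HM); lra.
Qed.

Lemma exists_async_code M T n :
  (1 <= M)%nat -> (1 <= T)%nat -> (1 <= n)%nat ->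
  INR (T * (n * (S M * (T * n) ^ M))) * (1 - rate M) ^ n < 1 ->
  exists c, async_code n M T c.
Proof.
  intros HM HT Hn Hsmall.
  pose proof (letter_prob_range M HM) as Hp.
  set (bad := fun h => exists c, In c (configs M T n) /\ (valid_config M T n c /\ covering n c h)).
  assert (Hbad : expect (letter_prob M) (cells T n) (fun h => indicator (bad h)) (fun _ => false) < 1).
  { eapply Rle_lt_trans; [|exact Hsmall].
    eapply Rle_trans; [apply expect_union_bound; [lra|intros; apply valid_covering_prob, HM]|].
    apply Rmult_le_compat_r; [apply pow_le; pose proof (rate_range M HM); lra|].
    apply le_INR, length_configs; assumption. }
  destruct (expect_lt_1 (letter_prob M) ltac:(lra) _ _ _ Hbad) as [h Hh].
  exists (codeword h); apply async_code_of_no_covering; [assumption|].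
  intros c Hc Hv Hcov; unfold indicator in Hh.
  destruct (excluded_middle_informative (bad h)) as [_|Hno]; [lra|].
  apply Hno; exists c; auto.
Qed.

(** * Asymptotics *)

Lemma ln_le_mono x y : 0 < x -> x <= y -> ln x <= ln y.
Proof. intros Hx [Hxy|<-]; [left; apply ln_increasing; assumption|right; reflexivity]. Qed.

Lemma exp_le_mono x y : x <= y -> exp x <= exp y.
Proof. intros [Hxy|<-]; [left; apply exp_increasing; assumption|right; reflexivity]. Qed.

Lemma ln_le_sub_one z : 0 < z -> ln z <= z - 1.
Proof.
  intros Hz; rewrite <- (ln_exp (z - 1)); apply ln_le_mono; [assumption|].
  pose proof (exp_ineq1_le (z - 1)); lra.
Qed.

Lemma pow_exp a k : exp a ^ k = exp (INR k * a).
Proof.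
  induction k as [|k IH]; simpl pow; [rewrite Rmult_0_l, exp_0; reflexivity|].
  rewrite IH, <- exp_plus, S_INR; f_equal; ring.
Qed.

Lemma pow_one_sub_le_exp r k : r <= 1 -> (1 - r) ^ k <= exp (- (r * INR k)).
Proof.
  intros Hr; replace (- (r * INR k)) with (INR k * - r) by ring; rewrite <- pow_exp.
  apply pow_incr; pose proof (exp_ineq1_le (- r)); lra.
Qed.

Lemma rate_lower_bound M : (1 <= M)%nat -> exp (-1) / (INR M + 1) <= rate M.
Proof.
  intros HM; unfold rate, letter_prob; rewrite S_INR.
  set (m := INR M); assert (Hm : 1 <= m) by (apply (le_INR 1); assumption).
  unfold Rdiv; rewrite Rmult_comm; apply Rmult_le_compat_l; [left; apply Rinv_0_lt_compat; lra|].
  replace (exp (-1)) with (exp (- / m) ^ M) by (rewrite pow_exp; f_equal; fold m; field; lra).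
  apply pow_incr; split; [left; apply exp_pos|].
  (* [exp (1/m) >= 1 + 1/m = (m+1)/m] *)
  rewrite exp_Ropp; replace (1 - / (m + 1)) with (/ ((m + 1) / m)) by (field; lra).
  apply Rinv_le_contravar; [apply Rdiv_lt_0_compat; lra|].
  pose proof (exp_ineq1_le (/ m)); replace ((m + 1) / m) with (1 + / m) by (field; lra); lra.
Qed.

Lemma exponent_negative (m delta A L N : R) :
  1 <= m -> 0 < delta -> 1 <= L -> 0 < N ->
  A = (1 + delta) * exp 1 * (m + 1) ^ 2 -> N - 1 < A * L ->
  2 * (ln (m + 1) + (m + 1) * (ln (A + 1) - 1 - ln (delta / 2))) / ((m + 1) * delta) < L ->
  ln (m + 1) + (m + 1) * ln N - delta * (m + 1) * L < 0.
Proof.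
  (* [ln N <= ln (A + 1) + ln L], and half of the margin [delta] absorbs [ln L]. *)
  intros Hm Hd HL HN HA HnA HB.
  assert (HA0 : 0 < A).
  { subst A; pose proof (exp_pos 1); pose proof (pow_lt (m + 1) 2 ltac:(lra)).
    apply Rmult_lt_0_compat; [apply Rmult_lt_0_compat|]; lra. }
  assert (HlnN : ln N <= ln (A + 1) + ln L).
  { rewrite <- ln_mult by lra; apply ln_le_mono; [assumption|nra]. }
  assert (HlnL : ln L <= delta / 2 * L - 1 - ln (delta / 2)).
  { pose proof (ln_le_sub_one (delta / 2 * L) ltac:(apply Rmult_lt_0_compat; lra)) as H.
    rewrite ln_mult in H by lra; lra. }
  set (B := ln (m + 1) + (m + 1) * (ln (A + 1) - 1 - ln (delta / 2))) in *.
  assert (HB' : B < (m + 1) * (delta / 2) * L).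
  { apply (Rmult_lt_compat_l ((m + 1) * (delta / 2))) in HB; [|apply Rmult_lt_0_compat; lra].
    replace ((m + 1) * (delta / 2) * (2 * B / ((m + 1) * delta))) with B in HB by (field; lra).
    exact HB. }
  assert ((m + 1) * ln N <= (m + 1) * (ln (A + 1) + (delta / 2 * L - 1 - ln (delta / 2))))
    by (apply Rmult_le_compat_l; lra).
  unfold B in HB'; nra.
Qed.

Lemma count_eq_exp M T n : 0 < INR T -> 0 < INR n ->
  INR (T * (n * (S M * (T * n) ^ M)))
  = exp (ln (INR M + 1) + (INR M + 1) * (ln (INR T) + ln (INR n))).
Proof.
  intros HT Hn; rewrite exp_plus, exp_ln by (pose proof (pos_INR M); lra).
  rewrite <- ln_mult, <- S_INR, <- ln_pow by (try apply Rmult_lt_0_compat; assumption).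
  rewrite exp_ln by (apply pow_lt, Rmult_lt_0_compat; assumption).
  rewrite !mult_INR, pow_INR, mult_INR, S_INR; simpl pow; ring.
Qed.

Lemma async_code_exists_eventually M delta :
  (1 <= M)%nat -> 0 < delta ->
  exists y, 0 < y /\ forall T n, y < INR T ->
    is_ceil ((1 + delta) * exp 1 * (INR M + 1) ^ 2 * ln (INR T)) n ->
    exists c, async_code n M T c.
Proof.
  intros HM Hd; set (m := INR M); assert (Hm : 1 <= m) by (apply (le_INR 1); assumption).
  set (A := (1 + delta) * exp 1 * (m + 1) ^ 2).
  set (B := 2 * (ln (m + 1) + (m + 1) * (ln (A + 1) - 1 - ln (delta / 2))) / ((m + 1) * delta)).
  exists (exp (Rmax B 1)); split; [apply exp_pos|]; intros T n HT [Hn1 Hn2].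
  set (L := ln (INR T)) in *; set (N := INR n) in *.
  assert (HT0 : 0 < INR T) by (pose proof (exp_pos (Rmax B 1)); lra).
  assert (HL : Rmax B 1 < L) by (rewrite <- (ln_exp (Rmax B 1)); apply ln_increasing; auto using exp_pos).
  pose proof (Rmax_l B 1); pose proof (Rmax_r B 1).
  assert (HA : 0 < A).
  { unfold A; pose proof (exp_pos 1); pose proof (pow_lt (m + 1) 2 ltac:(lra)).
    apply Rmult_lt_0_compat; [apply Rmult_lt_0_compat|]; lra. }
  assert (HN : 0 < N) by nra.
  apply exists_async_code; auto.
  { apply (INR_lt 0); exact HT0. }
  { apply (INR_lt 0); exact HN. }
  assert (Hrate : (1 + delta) * (m + 1) * L <= rate M * N).
  { apply Rle_trans with (exp (-1) / (m + 1) * (A * L)).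
    - right; unfold A; replace (exp (-1)) with (/ exp 1) by (rewrite <- exp_Ropp; f_equal; lra).
      field; split; [pose proof (exp_pos 1)|]; lra.
    - apply Rmult_le_compat; [|nra|apply rate_lower_bound; assumption|assumption].
      apply Rmult_le_pos; [left; apply exp_pos|left; apply Rinv_0_lt_compat; lra]. }
  pose proof (exponent_negative m delta A L N Hm Hd ltac:(lra) HN eq_refl ltac:(lra) ltac:(fold B; lra)).
  rewrite count_eq_exp by assumption; fold m L N.
  apply Rle_lt_trans with (exp (ln (m + 1) + (m + 1) * (L + ln N)) * exp (- ((1 + delta) * (m + 1) * L))).
  - apply Rmult_le_compat_l; [left; apply exp_pos|].
    eapply Rle_trans; [apply pow_one_sub_le_exp, (rate_range M HM)|].
    apply exp_le_mono; fold N; lra.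
  - rewrite <- exp_plus; apply Rlt_le_trans with (exp 0); [apply exp_increasing; lra|].
    rewrite exp_0; right; reflexivity.
Qed.

Lemma lt_INR_of_up_le y T : 0 < y -> (Z.to_nat (up y) <= T)%nat -> y < INR T.
Proof.
  intros Hy HT; destruct (archimed y) as [Hup _].
  apply Rlt_le_trans with (INR (Z.to_nat (up y))); [|apply le_INR; assumption].
  rewrite INR_IZR_INZ, ZArith.Znat.Z2Nat.id; [lra|].
  apply le_IZR; simpl; lra.
Qed.

Theorem theorem2 (M : nat) (delta : R) :
  (1 <= M)%nat -> 0 < delta ->
  exists T0 : nat, forall T n : nat, (T0 <= T)%nat ->
    is_ceil ((1 + delta) * exp 1 * ln 2 * (INR M + 1) ^ 2 * log2 (INR T)) n ->
    exists c : nat -> word, async_code n M T c.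
Proof.
  intros HM Hdelta.
  destruct (async_code_exists_eventually M delta HM Hdelta) as (y & Hy & Hcode).
  exists (Z.to_nat (up y)); intros T n HT Hn.
  apply Hcode; [apply lt_INR_of_up_le; assumption|].
  replace ((1 + delta) * exp 1 * (INR M + 1) ^ 2 * ln (INR T))
    with ((1 + delta) * exp 1 * ln 2 * (INR M + 1) ^ 2 * log2 (INR T)); [exact Hn|].
  unfold log2; field; pose proof ln_lt_2; lra.
Qed.
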